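(* Let $X,Y$ be countable discrete metric spaces, $d\in D(X,Y)$, $d'\in D(Y,X)$, and suppose $M_{d'\circ d}(X,X)=M_{d^0}(X,X)$ $(=C^*_u(X))$. Then there exists an almost isometry $f:X\to Y$ such that $d$ and $d_f$ are almost isometric, i.e. $\sup_{x\in X,y\in Y}|d(x,y)-d_f(x,y)|<\infty$.
   Context: $D(X,Y)$: metrics on $X\sqcup Y$ extending $d_X,d_Y$. $(d'\circ d)$ is the function on $X\sqcup X'$ ($X'$ a second copy of $X$) given by $d_X$ on each copy and $(d'\circ d)(x_1,x_2')=\inf_{y\in Y}(d(x_1,y)+d'(y,x_2'))$. For such a function $\rho$, $M_\rho(X,X)$ is the norm closure of bounded operators $T$ on $l^2(X)$ for which there is $L$ with $\langle T\delta_{x_1},\delta_{x_2}\rangle=0$ whenever $\rho(x_1,x_2')\ge L$. $d^0(x_1,x_2')=d_X(x_1,x_2)+1$. An almost isometry $f:X\to Y$ satisfies $d_X(x,x')-C\le d_Y(f(x),f(x'))\le d_X(x,x')+C$ for some $C>0$; $d_f(x,y)=\inf_{\tilde x\in X}(d_X(x,\tilde x)+C/2+d_Y(f(\tilde x),y))$. *)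

From Stdlib Require Import Reals Lra List ClassicalEpsilon.
Import ListNotations.
Open Scope R_scope.

Definition is_metric {T : Type} (dist : T -> T -> R) : Prop :=
  (forall x y, 0 <= dist x y) /\
  (forall x y, dist x y = 0 <-> x = y) /\
  (forall x y, dist x y = dist y x) /\
  (forall x y z, dist x z <= dist x y + dist y z).

Definition countable (T : Type) : Prop :=
  exists enc : T -> nat, forall a b, enc a = enc b -> a = b.

Definition discrete_metric {T : Type} (dist : T -> T -> R) : Prop :=
  forall x, exists eps, 0 < eps /\ forall y, y <> x -> eps <= dist x y.

Definition countable_discrete_metric_space (T : Type) (dist : T -> T -> R) : Prop :=
  countable T /\ is_metric dist /\ discrete_metric dist.

(* rho in D(X,Y): a metric on X ⊔ Y (= sum type X + Y) extending dX and dY *)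
Definition in_D {X Y : Type} (dX : X -> X -> R) (dY : Y -> Y -> R)
  (rho : (X + Y) -> (X + Y) -> R) : Prop :=
  is_metric rho /\
  (forall x x', rho (inl x) (inl x') = dX x x') /\
  (forall y y', rho (inr y) (inr y') = dY y y').

(* the mixed part d(x,y) of rho in D(X,Y) *)
Definition cross {X Y : Type} (rho : (X + Y) -> (X + Y) -> R) (x : X) (y : Y) : R :=
  rho (inl x) (inr y).

Definition Cx := (R * R)%type.
Definition C0 : Cx := (0, 0).
Definition Cadd (a b : Cx) : Cx := (fst a + fst b, snd a + snd b).
Definition Csub (a b : Cx) : Cx := (fst a - fst b, snd a - snd b).
Definition Cmul (a b : Cx) : Cx :=
  (fst a * fst b - snd a * snd b, fst a * snd b + snd a * fst b).
Definition Cconj (a : Cx) : Cx := (fst a, - snd a).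
Definition Cnorm2 (a : Cx) : R := fst a * fst a + snd a * snd a.
Definition Cabs (a : Cx) : R := sqrt (Cnorm2 a).

Definition Rsum {T : Type} (s : list T) (F : T -> R) : R :=
  fold_right (fun x acc => F x + acc) 0 s.
Definition Csum {T : Type} (s : list T) (F : T -> Cx) : Cx :=
  fold_right (fun x acc => Cadd (F x) acc) C0 s.

(* A (candidate) operator on l^2(X) is given by its matrix
   t x1 x2 = < T delta_{x1}, delta_{x2} >.  A matrix defines a bounded
   operator of norm <= M iff |<T xi, eta>| <= M ||xi|| ||eta|| for all
   finitely supported xi, eta; bounded operators on l^2(X) correspond
   bijectively to such matrices. *)
Definition matrix (X : Type) := X -> X -> Cx.

Definition l2norm {X : Type} (s : list X) (xi : X -> Cx) : R :=
  sqrt (Rsum s (fun x => Cnorm2 (xi x))).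

Definition form {X : Type} (t : matrix X) (s : list X) (xi eta : X -> Cx) : Cx :=
  Csum s (fun x1 => Csum s (fun x2 =>
    Cmul (Cmul (t x1 x2) (xi x1)) (Cconj (eta x2)))).

Definition op_norm_le {X : Type} (t : matrix X) (M : R) : Prop :=
  forall (s : list X) (xi eta : X -> Cx), NoDup s ->
    Cabs (form t s xi eta) <= M * l2norm s xi * l2norm s eta.

Definition bounded_op {X : Type} (t : matrix X) : Prop :=
  exists M, op_norm_le t M.

Definition msub {X : Type} (t t' : matrix X) : matrix X :=
  fun x1 x2 => Csub (t x1 x2) (t' x1 x2).

(* A function rho on X ⊔ X' enters M_rho(X,X) only through the predicate
   "rho(x1, x2') >= L"; we parametrize M by this predicate [rho_ge L x1 x2]. *)
Definition M_rho {X : Type} (rho_ge : R -> X -> X -> Prop) (t : matrix X) : Prop :=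
  bounded_op t /\
  forall eps, 0 < eps ->
    exists t' : matrix X,
      bounded_op t' /\
      (exists L, forall x1 x2, rho_ge L x1 x2 -> t' x1 x2 = C0) /\
      op_norm_le (msub t t') eps.

(* (d' o d)(x1, x2') = inf_y (d(x1,y) + d'(y,x2')) >= L, with inf over empty
   set = +infinity *)
Definition comp_ge {X Y : Type} (d : X -> Y -> R) (d' : Y -> X -> R)
  (L : R) (x1 x2 : X) : Prop :=
  forall y : Y, L <= d x1 y + d' y x2.

(* d^0(x1, x2') = dX(x1,x2) + 1 >= L *)
Definition d0_ge {X : Type} (dX : X -> X -> R) (L : R) (x1 x2 : X) : Prop :=
  L <= dX x1 x2 + 1.

Definition almost_isometry {X Y : Type} (dX : X -> X -> R) (dY : Y -> Y -> R)
  (f : X -> Y) (C : R) : Prop :=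
  0 < C /\
  forall x x', dX x x' - C <= dY (f x) (f x') /\ dY (f x) (f x') <= dX x x' + C.

Definition is_inf (E : R -> Prop) (m : R) : Prop :=
  (forall r, E r -> m <= r) /\ (forall b, (forall r, E r -> b <= r) -> b <= m).

(* infimum of a set of reals (meaningful when E is nonempty and bounded below) *)
Definition Rinf (E : R -> Prop) : R := epsilon (inhabits 0) (fun m => is_inf E m).

Definition d_f {X Y : Type} (dX : X -> X -> R) (dY : Y -> Y -> R)
  (f : X -> Y) (C : R) (x : X) (y : Y) : R :=
  Rinf (fun r => exists xt : X, r = dX x xt + C / 2 + dY (f xt) y).

From Stdlib Require Import Reals Lra List ClassicalEpsilon Classical.
From Coquelicot Require Complex.
Import ListNotations.
Open Scope R_scope.

(* The identity operator lies in M_rho(X,X) exactly when rho is bounded on the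
   diagonal: an operator of finite rho-propagation within 1/2 of the identity
   must have nonzero diagonal entries.  As d^0 = 1 on the diagonal, the identity
   lies in M_{d^0}(X,X), so by hypothesis (d' o d)(x, x') < L for all x, i.e.
   each x has some f(x) in Y with d(x, f(x)) < L.  Any such coarse section f of
   the gluing d is an almost isometry, and d <= d_f <= d + 2L by the triangle
   inequality in X ⊔ Y. *)

Lemma Cabs_Cmod (z : Cx) : Cabs z = Complex.Cmod z.
Proof. unfold Cabs, Cnorm2, Complex.Cmod. f_equal. simpl. ring. Qed.

Lemma Cabs_add (a b : Cx) : Cabs (Cadd a b) <= Cabs a + Cabs b.
Proof. rewrite !Cabs_Cmod. apply (Complex.Cmod_triangle a b). Qed.

Lemma Cabs_mul (a b : Cx) : Cabs (Cmul a b) = Cabs a * Cabs b.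
Proof. rewrite !Cabs_Cmod. apply (Complex.Cmod_mult a b). Qed.

Lemma Cabs_conj (a : Cx) : Cabs (Cconj a) = Cabs a.
Proof. rewrite !Cabs_Cmod. apply (Complex.Cmod_conj a). Qed.

Lemma Cabs_sq (a : Cx) : Cabs a * Cabs a = Cnorm2 a.
Proof. apply sqrt_sqrt. unfold Cnorm2. nra. Qed.

Lemma Cabs_C0 : Cabs C0 = 0.
Proof. unfold Cabs, Cnorm2, C0; simpl. rewrite Rmult_0_l, Rplus_0_l. apply sqrt_0. Qed.

Lemma Cabs_1 : Cabs (1, 0) = 1.
Proof. unfold Cabs, Cnorm2; simpl. rewrite Rmult_0_l, Rplus_0_r, Rmult_1_l. apply sqrt_1. Qed.

Lemma Cabs_Csum {T : Type} (s : list T) (g : T -> Cx) :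
  Cabs (Csum s g) <= Rsum s (fun x => Cabs (g x)).
Proof.
  induction s as [|a s IH]; simpl.
  - rewrite Cabs_C0. lra.
  - eapply Rle_trans; [apply Cabs_add | lra].
Qed.

Lemma Rsum_ext {T : Type} (s : list T) (F G : T -> R) :
  (forall x, In x s -> F x = G x) -> Rsum s F = Rsum s G.
Proof.
  induction s as [|a s IH]; simpl; intros H; auto.
  rewrite H, IH; auto.
Qed.

Lemma Rsum_le {T : Type} (s : list T) (F G : T -> R) :
  (forall x, In x s -> F x <= G x) -> Rsum s F <= Rsum s G.
Proof.
  induction s as [|a s IH]; simpl; intros H; [lra|].
  pose proof (H a (or_introl eq_refl)). pose proof (IH (fun x h => H x (or_intror h))). lra.
Qed.

Lemma Rsum_ge0 {T : Type} (s : list T) (F : T -> R) :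
  (forall x, 0 <= F x) -> 0 <= Rsum s F.
Proof. intros H. induction s as [|a s IH]; simpl; [lra|]. pose proof (H a). lra. Qed.

Lemma Rsum_eq0 {T : Type} (s : list T) (F : T -> R) :
  (forall x, In x s -> F x = 0) -> Rsum s F = 0.
Proof.
  induction s as [|a s IH]; simpl; intros H; [reflexivity|].
  rewrite H, IH; auto. ring.
Qed.

Lemma Rsum_delta {T : Type} (s : list T) (x : T) (c : T -> R) :
  NoDup s -> In x s ->
  Rsum s (fun y => if excluded_middle_informative (x = y) then c y else 0) = c x.
Proof.
  induction s as [|a s IH]; simpl; intros Hs Hx; [contradiction|].
  inversion Hs as [|? ? Ha Hs']; subst.
  destruct (excluded_middle_informative (x = a)) as [<-|Hxa].
  - rewrite Rsum_eq0; [ring|].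
    intros y Hy. destruct (excluded_middle_informative (x = y)) as [<-|]; tauto.
  - destruct Hx as [->|Hx]; [tauto|]. rewrite IH; auto. ring.
Qed.

Lemma sqrt_cauchy_schwarz2 (p q r s : R) :
  p * q + r * s <= sqrt (p * p + r * r) * sqrt (q * q + s * s).
Proof.
  rewrite <- sqrt_mult_alt by nra.
  eapply Rle_trans; [apply Rle_abs|].
  rewrite <- sqrt_Rsqr_abs. apply sqrt_le_1_alt. unfold Rsqr.
  pose proof (pow2_ge_0 (p * s - r * q)). nra.
Qed.

Lemma Rsum_cauchy_schwarz {T : Type} (s : list T) (u v : T -> R) :
  Rsum s (fun x => u x * v x) <=
  sqrt (Rsum s (fun x => u x * u x)) * sqrt (Rsum s (fun x => v x * v x)).
Proof.
  induction s as [|a s IH]; simpl; [rewrite sqrt_0; lra|].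
  set (A := Rsum s (fun x => u x * u x)) in *.
  set (B := Rsum s (fun x => v x * v x)) in *.
  assert (HA : 0 <= A) by (apply Rsum_ge0; intros; nra).
  assert (HB : 0 <= B) by (apply Rsum_ge0; intros; nra).
  rewrite <- (sqrt_sqrt A HA), <- (sqrt_sqrt B HB).
  pose proof (sqrt_cauchy_schwarz2 (u a) (v a) (sqrt A) (sqrt B)). lra.
Qed.

Lemma form_abs_le {X : Type} (t : matrix X) (s : list X) (xi eta : X -> Cx) :
  Cabs (form t s xi eta) <=
  Rsum s (fun x1 => Rsum s (fun x2 => Cabs (t x1 x2) * Cabs (xi x1) * Cabs (eta x2))).
Proof.
  unfold form. eapply Rle_trans; [apply Cabs_Csum|]. apply Rsum_le. intros x1 _.
  eapply Rle_trans; [apply Cabs_Csum|]. apply Rsum_le. intros x2 _.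
  rewrite !Cabs_mul, Cabs_conj. lra.
Qed.

Lemma op_norm_le_zero {X : Type} (t : matrix X) (eps : R) :
  0 <= eps -> (forall x1 x2, t x1 x2 = C0) -> op_norm_le t eps.
Proof.
  intros Heps Ht s xi eta _. eapply Rle_trans; [apply form_abs_le|].
  rewrite Rsum_eq0.
  - pose proof (sqrt_pos (Rsum s (fun x => Cnorm2 (xi x)))).
    pose proof (sqrt_pos (Rsum s (fun x => Cnorm2 (eta x)))).
    unfold l2norm. apply Rmult_le_pos; [apply Rmult_le_pos|]; assumption.
  - intros x1 _. apply Rsum_eq0. intros x2 _. rewrite Ht, Cabs_C0. ring.
Qed.

Lemma op_norm_le_diag {X : Type} (t : matrix X) (M : R) (x : X) :
  op_norm_le t M -> Cabs (t x x) <= M.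
Proof.
  intros H.
  specialize (H [x] (fun _ => (1, 0)) (fun _ => (1, 0)) (NoDup_cons x (@in_nil _ x) (NoDup_nil _))).
  replace (form t [x] _ _) with (t x x) in H.
  - unfold l2norm, Rsum, Cnorm2 in H; simpl in H.
    replace (1 * 1 + 0 * 0 + 0) with 1 in H by ring. rewrite sqrt_1 in H. lra.
  - unfold form, Csum, Cadd, Cmul, Cconj, C0; simpl.
    destruct (t x x) as [a b]; simpl. f_equal; ring.
Qed.

Definition Imat {X : Type} : matrix X :=
  fun x1 x2 => if excluded_middle_informative (x1 = x2) then (1, 0) else C0.

Lemma op_norm_le_Imat {X : Type} : @op_norm_le X Imat 1.
Proof.
  intros s xi eta Hs. eapply Rle_trans; [apply form_abs_le|].
  rewrite (Rsum_ext s _ (fun x => Cabs (xi x) * Cabs (eta x))).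
  - unfold l2norm. rewrite Rmult_1_l.
    rewrite (Rsum_ext s (fun x => Cnorm2 (xi x)) (fun x => Cabs (xi x) * Cabs (xi x)))
      by (intros; symmetry; apply Cabs_sq).
    rewrite (Rsum_ext s (fun x => Cnorm2 (eta x)) (fun x => Cabs (eta x) * Cabs (eta x)))
      by (intros; symmetry; apply Cabs_sq).
    apply Rsum_cauchy_schwarz.
  - intros x1 Hx1.
    rewrite <- (Rsum_delta s x1 (fun x2 => Cabs (xi x1) * Cabs (eta x2))) by assumption.
    apply Rsum_ext. intros x2 _. unfold Imat.
    destruct (excluded_middle_informative (x1 = x2)).
    + rewrite Cabs_1. ring.
    + rewrite Cabs_C0. ring.
Qed.

Lemma M_rho_Imat {X : Type} (rho_ge : R -> X -> X -> Prop) :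
  M_rho rho_ge Imat <-> exists L, forall x, ~ rho_ge L x x.
Proof.
  split.
  - intros [_ Happrox].
    destruct (Happrox (1 / 2)) as [t' [_ [[L Hprop] Hclose]]]; [lra|].
    exists L. intros x Hx.
    pose proof (op_norm_le_diag _ _ x Hclose) as Hdiag.
    unfold msub, Imat in Hdiag. rewrite (Hprop x x Hx) in Hdiag.
    destruct (excluded_middle_informative (x = x)) as [_|]; [|tauto].
    unfold Csub, C0 in Hdiag; simpl in Hdiag. rewrite Rminus_0_r, Rminus_diag in Hdiag.
    rewrite Cabs_1 in Hdiag. lra.
  - intros [L HL]. split; [exists 1; apply op_norm_le_Imat|].
    intros eps Heps. exists Imat. split; [exists 1; apply op_norm_le_Imat|]. split.
    + exists L. intros x1 x2 Hx. unfold Imat.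
      destruct (excluded_middle_informative (x1 = x2)) as [<-|]; [exfalso; exact (HL x1 Hx)|].
      reflexivity.
    + apply op_norm_le_zero; [lra|]. intros x1 x2. unfold msub, Csub, C0. f_equal; ring.
Qed.

Lemma is_inf_Rinf (E : R -> Prop) (b : R) :
  (exists r, E r) -> (forall r, E r -> b <= r) -> is_inf E (Rinf E).
Proof.
  intros [r0 Hr0] Hb. unfold Rinf. apply epsilon_spec.
  destruct (completeness (fun r => E (- r))) as [m [Hub Hlub]].
  - exists (- b). intros r Hr. specialize (Hb _ Hr). lra.
  - exists (- r0). rewrite Ropp_involutive. exact Hr0.
  - exists (- m). split.
    + intros r Hr. assert (- r <= m) by (apply Hub; rewrite Ropp_involutive; exact Hr). lra.
    + intros c Hc. enough (m <= - c) by lra.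
      apply Hlub. intros r Hr. specialize (Hc _ Hr). lra.
Qed.

Lemma Rinf_le (E : R -> Prop) (b r : R) :
  (forall r', E r' -> b <= r') -> E r -> Rinf E <= r.
Proof. intros Hb Hr. exact (proj1 (is_inf_Rinf E b (ex_intro _ r Hr) Hb) r Hr). Qed.

Lemma Rinf_ge (E : R -> Prop) (b : R) :
  (exists r, E r) -> (forall r, E r -> b <= r) -> b <= Rinf E.
Proof. intros Hne Hb. exact (proj2 (is_inf_Rinf E b Hne Hb) b Hb). Qed.

Section CoarseSection.

Variables (X Y : Type) (dX : X -> X -> R) (dY : Y -> Y -> R) (rho : (X + Y) -> (X + Y) -> R).
Hypothesis rho_in_D : in_D dX dY rho.
Variables (f : X -> Y) (L : R).
Hypothesis f_near : forall x, cross rho x (f x) <= L.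

Let rho_metric : is_metric rho := proj1 rho_in_D.
Let rho_X x x' : rho (inl x) (inl x') = dX x x' := proj1 (proj2 rho_in_D) x x'.
Let rho_Y y y' : rho (inr y) (inr y') = dY y y' := proj2 (proj2 rho_in_D) y y'.

Lemma coarse_section_almost_isometry : 0 < L -> almost_isometry dX dY f (2 * L).
Proof.
  intros HL. destruct rho_metric as [_ [_ [Hsym Htri]]].
  split; [lra|]. intros x x'. rewrite <- rho_X, <- rho_Y.
  pose proof (f_near x). pose proof (f_near x'). unfold cross in *.
  pose proof (Hsym (inr (f x)) (inl x)). pose proof (Hsym (inr (f x')) (inl x')).
  pose proof (Htri (inl x) (inr (f x)) (inl x')).
  pose proof (Htri (inr (f x)) (inr (f x')) (inl x')).
  pose proof (Htri (inr (f x)) (inl x) (inr (f x'))).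
  pose proof (Htri (inl x) (inl x') (inr (f x'))).
  split; lra.
Qed.

Lemma cross_le_d_f_candidate x xt y :
  cross rho x y <= dX x xt + 2 * L / 2 + dY (f xt) y.
Proof.
  destruct rho_metric as [_ [_ [_ Htri]]].
  rewrite <- rho_X, <- rho_Y. pose proof (f_near xt). unfold cross in *.
  pose proof (Htri (inl x) (inl xt) (inr y)).
  pose proof (Htri (inl xt) (inr (f xt)) (inr y)). lra.
Qed.

Lemma cross_le_d_f x y : cross rho x y <= d_f dX dY f (2 * L) x y.
Proof.
  apply Rinf_ge.
  - exists (dX x x + 2 * L / 2 + dY (f x) y). exists x. reflexivity.
  - intros r [xt ->]. apply cross_le_d_f_candidate.
Qed.

Lemma d_f_le_cross x y : d_f dX dY f (2 * L) x y <= cross rho x y + 2 * L.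
Proof.
  destruct rho_metric as [_ [Hzero [Hsym Htri]]].
  apply Rle_trans with (dX x x + 2 * L / 2 + dY (f x) y).
  - apply (Rinf_le _ (cross rho x y)).
    + intros r [xt ->]. apply cross_le_d_f_candidate.
    + exists x. reflexivity.
  - rewrite <- rho_X, <- rho_Y, (proj2 (Hzero _ _) eq_refl).
    pose proof (f_near x). unfold cross in *.
    pose proof (Htri (inr (f x)) (inl x) (inr y)). pose proof (Hsym (inr (f x)) (inl x)). lra.
Qed.

Lemma cross_d_f_close x y : Rabs (cross rho x y - d_f dX dY f (2 * L) x y) <= 2 * L.
Proof.
  pose proof (cross_le_d_f x y). pose proof (d_f_le_cross x y).
  apply Rabs_le. lra.
Qed.

End CoarseSection.

Theorem theorem4p2 (X Y : Type) (dX : X -> X -> R) (dY : Y -> Y -> R)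
  (rho : (X + Y) -> (X + Y) -> R) (rho' : (Y + X) -> (Y + X) -> R) :
  countable_discrete_metric_space X dX ->
  countable_discrete_metric_space Y dY ->
  in_D dX dY rho ->
  in_D dY dX rho' ->
  (forall t : matrix X,
     M_rho (comp_ge (cross rho) (cross rho')) t <-> M_rho (d0_ge dX) t) ->
  exists (f : X -> Y) (C : R),
    almost_isometry dX dY f C /\
    exists K : R, forall (x : X) (y : Y),
      Rabs (cross rho x y - d_f dX dY f C x y) <= K.
Proof.
  intros _ _ Hrho [[Hpos' _] _] Heq.
  pose proof Hrho as [[_ [Hzero _]] [HX _]].
  assert (Hd0 : M_rho (d0_ge dX) Imat).
  { apply M_rho_Imat. exists 2. intros x. unfold d0_ge.
    rewrite <- HX, (proj2 (Hzero _ _) eq_refl). lra. }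
  apply Heq, M_rho_Imat in Hd0 as [L HL].
  assert (Hnear : forall x, exists y, cross rho x y < L).
  { intros x. destruct (not_all_ex_not _ _ (HL x)) as [y Hy].
    exists y. pose proof (Hpos' (inl y) (inr x)). unfold cross in *. lra. }
  destruct (choice _ Hnear) as [f Hf].
  set (L0 := Rmax L 1).
  assert (Hf0 : forall x, cross rho x (f x) <= L0)
    by (intros x; pose proof (Hf x); pose proof (Rmax_l L 1); unfold L0; lra).
  assert (HL0 : 0 < L0) by (pose proof (Rmax_r L 1); unfold L0; lra).
  exists f, (2 * L0). split.
  - exact (coarse_section_almost_isometry X Y dX dY rho Hrho f L0 Hf0 HL0).
  - exists (2 * L0). exact (cross_d_f_close X Y dX dY rho Hrho f L0 Hf0).
Qed.
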